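(* Let $T$ be a tree on $n\ge 3$ vertices and let $\mathcal{P}$ be a separating path system of $T$. Then: (i) with the exception of at most one leaf, every leaf of $T$ is an endpoint of a path in $\mathcal{P}$; (ii) if a path in $\mathcal{P}$ has two leaves $u,v$ of $T$ as its endpoints, then there is at least one path in $\mathcal{P}$ which has exactly one of $u,v$ as an endpoint; (iii) every vertex of degree two in $T$ is an endpoint of a path in $\mathcal{P}$.
   Context: For a graph $G$, a family $\mathcal{P}$ of subsets of $E(G)$ is a separating path system of $G$ if every member of $\mathcal{P}$ is (the edge set of) a path in $G$, and for every pair of distinct edges $e,e'\in E(G)$ there is some $P\in\mathcal{P}$ containing exactly one of $e,e'$. *)

From mathcomp Require Import all_boot all_order.
Set Implicit Arguments. Unset Strict Implicit. Unset Printing Implicit Defensive.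

Definition simple_graph (V : finType) (adj : rel V) : Prop :=
  symmetric adj /\ irreflexive adj.

Definition edge_set (V : finType) (adj : rel V) : {set {set V}} :=
  [set E : {set V} | [exists x : V, exists y : V, adj x y && (E == [set x; y])]].

Definition connected_graph (V : finType) (adj : rel V) : Prop :=
  forall x y : V, connect adj x y.

Definition acyclic_graph (V : finType) (adj : rel V) : Prop :=
  forall c : seq V, 3 <= size c -> ~ ucycle adj c.

Definition is_tree (V : finType) (adj : rel V) : Prop :=
  simple_graph adj /\ connected_graph adj /\ acyclic_graph adj.

Definition deg (V : finType) (adj : rel V) (v : V) : nat := #|[set y | adj v y]|.

Definition is_leaf (V : finType) (adj : rel V) (v : V) : bool := deg adj v == 1.

Definition walk_edges (V : finType) (x : V) (p : seq V) : {set {set V}} :=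
  [set [set uv.1; uv.2] | uv in zip (x :: p) p].

Definition is_path_edges (V : finType) (adj : rel V) (F : {set {set V}}) : Prop :=
  exists (x : V) (p : seq V), [/\ path adj x p, uniq (x :: p) & F = walk_edges x p].

Definition separating_path_system (V : finType) (adj : rel V)
    (P : {set {set {set V}}}) : Prop :=
  (forall F, F \in P -> is_path_edges adj F) /\
  (forall e1 e2, e1 \in edge_set adj -> e2 \in edge_set adj -> e1 != e2 ->
     exists2 F, F \in P & (e1 \in F) != (e2 \in F)).

Definition is_endpoint (V : finType) (v : V) (F : {set {set V}}) : bool :=
  #|[set E in F | v \in E]| == 1.

Definition covered (V : finType) (P : {set {set {set V}}}) (v : V) : Prop :=
  exists2 F, F \in P & is_endpoint v F.

From mathcomp Require Import all_boot all_order.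
Set Implicit Arguments. Unset Strict Implicit. Unset Printing Implicit Defensive.

(* The edges at a vertex v are the sets [set v; y] with y a neighbour of v,
   so for a leaf u with neighbour a, u is an endpoint of a path F iff
   [set u; a] \in F, and a vertex of degree two with neighbours a, b is an
   endpoint of F as soon as F contains exactly one of [set v; a], [set v; b].
   Hence (iii) follows by separating the two edges at v, and (i) and (ii) by
   separating the pendant edges at two distinct leaves; these edges differ
   because two leaves adjacent to each other would form a whole component,
   impossible in a connected graph on at least three vertices. *)

Lemma set2_inj (T : finType) (v : T) : injective (fun y => [set v; y]).
Proof.
move=> y z /= eq_vy_vz.
have /set2P[yv | //] : y \in [set v; z] by rewrite -eq_vy_vz set22.
have /set2P[zv | //] : z \in [set v; y] by rewrite eq_vy_vz set22.
by rewrite yv zv.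
Qed.

Lemma adj_edge_set (V : finType) (adj : rel V) x y :
  adj x y -> [set x; y] \in edge_set adj.
Proof.
by move=> adj_xy; rewrite inE; apply/existsP; exists x; apply/existsP; exists y;
  rewrite adj_xy eqxx.
Qed.

Section Endpoints.

Variables (V : finType) (adj : rel V).
Hypothesis adj_sym : symmetric adj.

Lemma path_edges_sub (F : {set {set V}}) :
  is_path_edges adj F -> F \subset edge_set adj.
Proof.
case=> x [p [xp _ ->]]; apply/subsetP => _ /imsetP[[y z] yz_p ->] /=.
apply: adj_edge_set; elim: p x xp yz_p => [|w p IHp] x //= /andP[xw wp].
by case/predU1P => [[-> ->] // | ]; apply: IHp.
Qed.

Lemma edge_set_at E v :
  E \in edge_set adj -> v \in E -> exists2 y, adj v y & E = [set v; y].
Proof.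
rewrite inE => /existsP[x /existsP[y /andP[adj_xy /eqP ->]]] /set2P[->|->].
  by exists y.
by exists x; [rewrite adj_sym | rewrite setUC].
Qed.

Lemma is_endpointE (F : {set {set V}}) v : F \subset edge_set adj ->
  is_endpoint v F = (#|[set y | adj v y & [set v; y] \in F]| == 1).
Proof.
move=> /subsetP F_edges; rewrite /is_endpoint -(card_imset _ (@set2_inj V v)).
suff -> : [set E in F | v \in E] =
  [set [set v; y] | y in [set y | adj v y & [set v; y] \in F]] by [].
apply/setP => E; rewrite inE; apply/andP/imsetP.
  case=> EF vE; have [y adj_vy E_vy] := edge_set_at (F_edges E EF) vE.
  by exists y; rewrite // inE adj_vy -E_vy.
by case=> y /[!inE] /andP[_ vyF] ->; rewrite vyF set21.
Qed.

Lemma leaf_endpointE (F : {set {set V}}) u a : F \subset edge_set adj ->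
  [set y | adj u y] = [set a] -> is_endpoint u F = ([set u; a] \in F).
Proof.
move=> F_edges Nu; rewrite is_endpointE //.
have adjE y : adj u y = (y == a) by rewrite -in_set1 -Nu inE.
case uaF: ([set u; a] \in F).
  suff -> : [set y | adj u y & [set u; y] \in F] = [set a] by rewrite cards1.
  by apply/setP => y; rewrite !inE adjE andb_idr // => /eqP->.
suff -> : [set y | adj u y & [set u; y] \in F] = set0 by rewrite cards0.
by apply/setP => y; rewrite !inE adjE; case: eqP => // ->; rewrite uaF.
Qed.

Lemma deg2_endpoint (F : {set {set V}}) v a b : F \subset edge_set adj ->
  [set y | adj v y] = [set a; b] ->
  ([set v; a] \in F) != ([set v; b] \in F) -> is_endpoint v F.
Proof.
move=> F_edges Nv; rewrite is_endpointE //.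
have edges_at_v a' b' : [set y | adj v y] = [set a'; b'] ->
    [set v; a'] \in F -> [set v; b'] \notin F ->
    [set y | adj v y & [set v; y] \in F] = [set a'].
  move=> Nv' va'F vb'F; apply/setP => y; have := in_set2 y a' b'.
  rewrite -Nv' !inE => ->.
  case: eqP => [-> | _]; first by rewrite va'F.
  by case: eqP => // ->; rewrite (negbTE vb'F).
case vaF: ([set v; a] \in F); case vbF: ([set v; b] \in F) => // _.
  by rewrite (edges_at_v a b) ?vbF ?cards1.
by rewrite setUC in Nv; rewrite (edges_at_v b a) ?vaF ?cards1.
Qed.

End Endpoints.

Lemma leaves_not_adjacent (V : finType) (adj : rel V) u v :
  symmetric adj -> connected_graph adj -> 2 < #|V| ->
  [set y | adj u y] = [set v] -> [set y | adj v y] != [set u].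
Proof.
move=> adj_sym conn V3 Nu; apply/negP => /eqP Nv.
have uv_closed : closed adj (mem [set u; v]).
  apply: intro_closed; first exact: sym_connect_sym.
  move=> x y adj_xy /set2P[] x_uv; subst x;
    [have : y \in [set v] by rewrite -Nu inE
    |have : y \in [set u] by rewrite -Nv inE];
    by move/set1P->; rewrite !inE eqxx ?orbT.
suff : #|V| <= 2 by rewrite leqNgt V3.
rewrite -cardsT (leq_trans _ (card_size [:: u; v])) // -cardsE.
apply/subset_leq_card/subsetP => w _.
by have := closed_connect uv_closed (conn u w); rewrite !inE eqxx => <-.
Qed.

Section SeparatingPathSystem.

Variables (V : finType) (adj : rel V) (P : {set {set {set V}}}).
Hypotheses (adj_sym : symmetric adj) (sepP : separating_path_system adj P).

Let P_edges F : F \in P -> F \subset edge_set adj.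
Proof. by case: sepP => P_paths _ /P_paths/path_edges_sub. Qed.

Let separate_edges x y x' y' :
  adj x y -> adj x' y' -> [set x; y] != [set x'; y'] ->
  exists2 F, F \in P & ([set x; y] \in F) != ([set x'; y'] \in F).
Proof. by case: sepP => _ + /adj_edge_set + /adj_edge_set; apply. Qed.

Lemma leaves_separated u v : connected_graph adj -> 2 < #|V| ->
  is_leaf adj u -> is_leaf adj v -> u != v ->
  exists2 F, F \in P & is_endpoint u F != is_endpoint v F.
Proof.
move=> conn V3 /cards1P[a Nu] /cards1P[b Nv] uv.
have adj_nbr x y : [set z | adj x z] = [set y] -> adj x y.
  by move=> Nx; have := set11 y; rewrite -Nx inE.
have ua_vb : [set u; a] != [set v; b].
  apply/eqP => ua_vb.
  have /set2P[/eqP | ub] : u \in [set v; b] by rewrite -ua_vb set21.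
    by rewrite (negbTE uv).
  have /set2P[/eqP | va] : v \in [set u; a] by rewrite ua_vb set21.
    by rewrite eq_sym (negbTE uv).
  move: Nu Nv; rewrite ub va => Nb Na.
  by have := leaves_not_adjacent adj_sym conn V3 Nb; rewrite Na eqxx.
have [F PF sepF] := separate_edges (adj_nbr _ _ Nu) (adj_nbr _ _ Nv) ua_vb.
by exists F; rewrite // (leaf_endpointE adj_sym (P_edges PF) Nu)
  (leaf_endpointE adj_sym (P_edges PF) Nv).
Qed.

Lemma deg2_covered v : deg adj v = 2 -> covered P v.
Proof.
move=> /eqP/cards2P[a [b [ab Nv]]].
have adj_va : adj v a by have := set21 a b; rewrite -Nv inE.
have adj_vb : adj v b by have := set22 a b; rewrite -Nv inE.
have va_vb : [set v; a] != [set v; b] by apply: contra_neq ab; apply: set2_inj.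
have [F PF sepF] := separate_edges adj_va adj_vb va_vb.
exists F => //; exact (deg2_endpoint adj_sym (P_edges PF) Nv sepF).
Qed.

End SeparatingPathSystem.

Theorem lemma6p1 (V : finType) (adj : rel V) (P : {set {set {set V}}}) :
  is_tree adj -> 3 <= #|V| -> separating_path_system adj P ->
  (forall u v : V, is_leaf adj u -> is_leaf adj v -> u != v ->
     covered P u \/ covered P v) /\
  (forall F u v, F \in P -> is_leaf adj u -> is_leaf adj v -> u != v ->
     is_endpoint u F -> is_endpoint v F ->
     exists2 F', F' \in P & is_endpoint u F' != is_endpoint v F') /\
  (forall v : V, deg adj v = 2 -> covered P v).
Proof.
move=> [[adj_sym _] [conn _]] V3 sepP.
have leaves_sep := leaves_separated adj_sym sepP conn V3.
split; [|split].
- move=> u v lu lv /(leaves_sep u v lu lv)[F PF].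
  case uF: (is_endpoint u F) => vF; [left | right]; exists F => //.
  by case: (is_endpoint v F) vF.
- by move=> F u v _ lu lv uv _ _; exact: leaves_sep.
- exact: deg2_covered.
Qed.
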